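(* Let $\mathcal{H}$ be a separable infinite-dimensional complex Hilbert space and let $T\in\mathcal{B}(\mathcal{H})$ be quasinilpotent. Then the power set $\Lambda(T)$ is right closed; that is, $\sup Y\in\Lambda(T)$ for every nonempty subset $Y\subseteq\Lambda(T)$.
   Context: An operator $T\in\mathcal{B}(\mathcal{H})$ is quasinilpotent if $\sigma(T)=\{0\}$. For quasinilpotent $T$ and $x\in\mathcal{H}\setminus\{0\}$, set $k_x=k_x(T)=\limsup_{\lambda\to0}\frac{\ln\|(\lambda-T)^{-1}x\|}{\ln\|(\lambda-T)^{-1}\|}$, and define the power set $\Lambda(T)=\{k_x: x\neq0\}$ (it is a subset of $[0,1]$). A nonempty set $X\subseteq\mathbb{R}$ is called right closed if $\sup Y\in X$ for every nonempty bounded subset $Y$ of $X$. *)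

From HB Require Import structures.
From Stdlib Require Import ClassicalEpsilon.
From mathcomp Require Import all_boot all_order all_algebra.
From mathcomp Require Import complex.
From mathcomp Require Import all_classical all_reals all_analysis.
Import Order.TTheory GRing.Theory Num.Theory.

Set Implicit Arguments.
Unset Strict Implicit.
Unset Printing Implicit Defensive.

Local Open Scope classical_set_scope.
Local Open Scope ring_scope.

Section QuasinilpotentPowerSet.
Variable R : realType.
Local Notation C := R[i].
Variable V : lmodType C.
Variable ip : V -> V -> C.

Record inner_product : Prop := {
  ip_linl : forall (a : C) (x y z : V), ip (a *: x + y) z = a * ip x z + ip y z;
  ip_conj_sym : forall x y : V, ip y x = (ip x y)^*;
  ip_ge0 : forall x : V, 0 <= ip x x;
  ip_def : forall x : V, ip x x = 0 -> x = 0 }.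

Definition hnorm (x : V) : R := Num.sqrt (complex.Re (ip x x)).

Definition complete_ip : Prop :=
  forall u : nat -> V,
    (forall e : R, 0 < e -> exists N : nat, forall m n : nat,
        (N <= m)%N -> (N <= n)%N -> hnorm (u m - u n) < e) ->
    exists l : V, forall e : R, 0 < e -> exists N : nat, forall n : nat,
        (N <= n)%N -> hnorm (u n - l) < e.

Definition hilbert_space : Prop := inner_product /\ complete_ip.

Definition separable : Prop :=
  exists d : nat -> V, forall (x : V) (e : R), 0 < e -> exists n : nat, hnorm (x - d n) < e.

Definition infinite_dimensional : Prop :=
  forall n : nat, exists v : 'I_n -> V,
    forall c : 'I_n -> C, \sum_(i < n) c i *: v i = 0 -> forall i, c i = 0.

Definition bounded_op (T : V -> V) : Prop :=
  linear T /\ exists M : R, forall x : V, hnorm (T x) <= M * hnorm x.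

Definition is_inverse_op (T S : V -> V) : Prop :=
  bounded_op S /\ (forall x, S (T x) = x) /\ (forall x, T (S x) = x).

Definition invertible_op (T : V -> V) : Prop := exists S, is_inverse_op T S.

Definition shift_op (l : C) (T : V -> V) : V -> V := fun x => l *: x - T x.

Definition spectrum (T : V -> V) : set C :=
  [set l | ~ invertible_op (shift_op l T)].

Definition quasinilpotent (T : V -> V) : Prop :=
  bounded_op T /\ spectrum T = [set 0].

Definition op_norm (S : V -> V) : R :=
  sup [set hnorm (S x) | x in [set x : V | hnorm x <= 1]].

(* (l - T)^{-1} (an arbitrary function when l - T is not invertible) *)
Definition resolvent (T : V -> V) (l : C) : V -> V :=
  epsilon (inhabits id) (fun S => is_inverse_op (shift_op l T) S).

Definition power_quotient (T : V -> V) (x : V) (l : C) : R :=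
  ln (hnorm (resolvent T l x)) / ln (op_norm (resolvent T l)).

(* k_x = limsup_{l -> 0, l <> 0} power_quotient, as inf_{r>0} sup_{0<|l|<r} *)
Definition k_x (T : V -> V) (x : V) : \bar R :=
  ereal_inf [set ereal_sup [set (power_quotient T x l)%:E
                            | l in [set l : C | 0 < complex.ComplexField.Normc.normc l < r]]
            | r in [set r : R | 0 < r]].

Definition power_set (T : V -> V) : set (\bar R) :=
  [set k_x T x | x in [set x : V | x <> 0]].

End QuasinilpotentPowerSet.

(* right closedness (sup taken in the extended reals; every subset of \bar R is bounded) *)
Definition right_closed (R : realType) (X : set (\bar R)) : Prop :=
  forall Y : set (\bar R), Y !=set0 -> Y `<=` X -> X (ereal_sup Y).

From Stdlib Require Import ClassicalEpsilon.
From mathcomp Require Import all_boot all_order all_algebra complex.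
From mathcomp Require Import all_classical all_reals all_analysis.
From mathcomp Require Import ring lra.
Import Order.TTheory GRing.Theory Num.Theory.
Import numFieldNormedType.Exports.

(* Write R(l) for (l - T)^-1.  Let s = sup Y be not attained, so that s is the limit
   of an increasing sequence y_n = k_(x_n) with x_n <> 0.  The point x with k_x = s is
   x = sum_n a_n x_n for weights a_n > 0 chosen inductively, together with points
   l_n -> 0.

   Since 0 is in the spectrum, |R(l)| -> oo as l -> 0: a resolvent bounded near 0
   would invert -T by a contraction argument.  On the other hand |R(l)| is bounded,
   by M_n say, on each compact annulus rho_(n+1) <= |l| <= 1.

   The radii rho_n decrease so fast that |R(l) x_j| < |R(l)|^s for j < n
   when |l| < rho_n, and the tail of x after x_n is kept below M_n^(s-1).  Hence
   |R(l) x| <= 2 |R(l)|^s on the annulus rho_(n+1) <= |l| < rho_n.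

   The point l_n is chosen where |R(l_n) x_n| exceeds |R(l_n)|^w for a
   w slightly below y_n while the partial sum before x_n is still much smaller; all
   later weights are then so small that the tail cannot cancel the n-th term, so
   |R(l_n) x| >= a_n/2 |R(l_n)|^w. *)

Set Implicit Arguments.
Unset Strict Implicit.
Unset Printing Implicit Defensive.

Local Open Scope ring_scope.
Local Open Scope classical_set_scope.

Local Notation normc := complex.ComplexField.Normc.normc.

Section HalfPowers.
Variable R : realType.
Local Notation half n := ((2^-1 : R) ^+ n).

Lemma halfpow_gt0 n : 0 < half n.
Proof. by rewrite exprn_gt0 // invr_gt0 ltr0n. Qed.

Lemma halfpow_le1 n : half n <= 1.
Proof. by rewrite exprn_ile1 // ?invr_ge0 ?ler0n // invf_le1 ?ler1n. Qed.

Lemma halfpowS n : half n.+1 = half n / 2.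
Proof. by rewrite exprSr. Qed.

Lemma halfpow_leW m n : (m <= n)%N -> half n <= half m.
Proof.
move=> /subnK <-; rewrite exprD -[leRHS]mul1r.
by rewrite ler_wpM2r ?(ltW (halfpow_gt0 _)) ?halfpow_le1.
Qed.

Lemma halfpow_lt d : 0 < d -> exists n, half n < d.
Proof.
move=> d0; exists (Num.truncn d^-1).+1.
have N_lt : (Num.truncn d^-1).+1%:R < 2 ^+ (Num.truncn d^-1).+1 :> R.
  by rewrite -natrX ltr_nat ltn_expl.
rewrite exprVn invf_plt ?posrE ?exprn_gt0 ?ltr0n //.
exact: lt_trans (truncnS_gt _) N_lt.
Qed.

End HalfPowers.

Lemma increasing_seq_ge (h : nat -> nat) : increasing_seq h -> forall n, (n <= h n)%N.
Proof.
move=> h_incr; elim=> [//|n IHn]; apply: leq_ltn_trans IHn _.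
by rewrite ltnNge; apply/negP => le_h; move: (le_h : (h n.+1 <= h n)%O); rewrite h_incr ltnn.
Qed.

Section ComplexNorm.
Variable R : realType.
Local Notation C := R[i].

Lemma normc_ge0 (l : C) : 0 <= normc l.
Proof. by case: l => a b; exact: sqrtr_ge0. Qed.

Lemma normc_real (c : R) : normc c%:C%C = `|c|.
Proof. by rewrite /= expr0n /= addr0 sqrtr_sqr. Qed.

Lemma normc_gt0_neq0 (l : C) : 0 < normc l -> l != 0.
Proof. by apply: contraTneq => ->; rewrite complex.ComplexField.Normc.normc0 ltxx. Qed.

Lemma Re_le_normc (l : C) : `|complex.Re l| <= normc l.
Proof.
case: l => a b /=; rewrite -sqrtr_sqr ler_sqrt ?addr_ge0 ?sqr_ge0 //.
by rewrite lerDl sqr_ge0.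
Qed.

Lemma Im_le_normc (l : C) : `|complex.Im l| <= normc l.
Proof.
case: l => a b /=; rewrite -sqrtr_sqr ler_sqrt ?addr_ge0 ?sqr_ge0 //.
by rewrite lerDr sqr_ge0.
Qed.

Lemma normc_le_ReIm (l : C) : normc l <= `|complex.Re l| + `|complex.Im l|.
Proof.
case: l => a b /=.
rewrite -(ger0_norm (addr_ge0 (normr_ge0 a) (normr_ge0 b))) -sqrtr_sqr.
rewrite ler_sqrt ?sqr_ge0 // sqrrD !real_normK ?num_real //.
have := mulr_ge0 (normr_ge0 a) (normr_ge0 b); lra.
Qed.

Lemma normc_cluster (u : nat -> C) (M : R) : (forall n, normc (u n) <= M) ->
  exists p : C, forall e, 0 < e -> forall N, exists2 n, (N <= n)%N & normc (u n - p) < e.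
Proof.
move=> uM.
have M_real : M \is Num.real := ger0_real (le_trans (normc_ge0 (u 0%N)) (uM 0%N)).
have bounded_by_M (v : nat -> R) : (forall n, `|v n| <= M) -> bounded_fun v.
  by move=> vM; exists M; split=> // x Mx n _; exact: le_trans (vM n) (ltW Mx).
have [f f_incr /cvgrPdist_lt Ref] := bolzano_weierstrass
  (bounded_by_M _ (fun n => le_trans (Re_le_normc (u n)) (uM n))).
have [g g_incr /cvgrPdist_lt Imfg] := bolzano_weierstrass
  (bounded_by_M (fun n => complex.Im (u (f n))) (fun n => le_trans (Im_le_normc _) (uM (f n)))).
exists (limn ((fun n => complex.Re (u n)) \o f) +i* limn ((fun n => complex.Im (u (f n))) \o g))%C.
move=> e e0 N; have e20 : 0 < e / 2 by rewrite divr_gt0.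
have [N1 _ hN1] := Ref _ e20; have [N2 _ hN2] := Imfg _ e20.
pose n := maxn N (maxn N1 N2).
exists (f (g n)).
  apply: leq_trans (increasing_seq_ge f_incr _).
  by apply: leq_trans (increasing_seq_ge g_incr n); exact: leq_maxl.
apply: le_lt_trans (normc_le_ReIm _) _.
have n_ge_N1 : (N1 <= g n)%N.
  by apply: leq_trans (increasing_seq_ge g_incr n); rewrite /n !leq_max leqnn orbT.
have n_ge_N2 : (N2 <= n)%N by rewrite /n !leq_max leqnn !orbT.
have := hN1 _ n_ge_N1; have := hN2 _ n_ge_N2; rewrite /=.
case: (u (f (g n))) => a b /= Im_close Re_close.
rewrite distrC in Re_close; rewrite distrC in Im_close; rewrite [e]splitr; exact: ltrD.
Qed.

End ComplexNorm.

Section InnerProductSpace.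
Variable R : realType.
Local Notation C := R[i].
Variable V : lmodType C.
Variable ip : V -> V -> C.
Hypothesis ipP : inner_product ip.
Local Notation "`‖ x ‖" := (hnorm ip x) (at level 0, x at level 99, format "`‖ x ‖").

Lemma ipDl x y z : ip (x + y) z = ip x z + ip y z.
Proof. by rewrite -[x]scale1r (ip_linl ipP) mul1r scale1r. Qed.

Lemma ip0l z : ip 0 z = 0.
Proof. by apply: (@addrI _ (ip 0 z)); rewrite -ipDl !addr0. Qed.

Lemma ipZl a x z : ip (a *: x) z = a * ip x z.
Proof. by rewrite -[a *: x]addr0 (ip_linl ipP) ip0l addr0. Qed.

Lemma ipDr x y z : ip z (x + y) = ip z x + ip z y.
Proof. by rewrite !(ip_conj_sym ipP _ z) ipDl rmorphD. Qed.

Lemma ipZr a x z : ip z (a *: x) = a^* * ip z x.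
Proof. by rewrite !(ip_conj_sym ipP _ z) ipZl rmorphM. Qed.

Lemma ip0r z : ip z 0 = 0.
Proof. by rewrite (ip_conj_sym ipP) ip0l conjC0. Qed.

Lemma Re_ipC x y : complex.Re (ip y x) = complex.Re (ip x y).
Proof. by rewrite (ip_conj_sym ipP); case: (ip x y). Qed.

Lemma Re_ip_ge0 x : 0 <= complex.Re (ip x x).
Proof. by have := ip_ge0 ipP x; rewrite lecE => /andP[]. Qed.

Lemma ip_real x : ip x x = (complex.Re (ip x x))%:C%C.
Proof.
have := ip_ge0 ipP x; rewrite lecE => /andP[/eqP Im0 _].
by move: Im0; case: (ip x x) => a b /= ->.
Qed.

Lemma hnorm_ge0 x : 0 <= `‖x‖.
Proof. exact: sqrtr_ge0. Qed.

Lemma sqr_hnorm x : `‖x‖ ^+ 2 = complex.Re (ip x x).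
Proof. by rewrite sqr_sqrtr // Re_ip_ge0. Qed.

Lemma hnorm_eq0 x : `‖x‖ = 0 -> x = 0.
Proof. by move=> x0; apply: (ip_def ipP); rewrite ip_real -sqr_hnorm x0 expr0n. Qed.

Lemma hnorm_gt0 x : x != 0 -> 0 < `‖x‖.
Proof. by move=> x0; rewrite lt_def hnorm_ge0 andbT; apply: contra_neq x0; apply: hnorm_eq0. Qed.

Lemma hnorm0 : `‖0‖ = 0.
Proof. by rewrite /hnorm ip0l sqrtr0. Qed.

Lemma hnormZ a x : `‖a *: x‖ = normc a * `‖x‖.
Proof.
rewrite /hnorm ipZl ipZr mulrA -normCK ip_real.
have -> : `|a| ^+ 2 * (complex.Re (ip x x))%:C%C = (normc a ^+ 2 * complex.Re (ip x x))%:C%C.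
  by rewrite rmorphM rmorphXn.
by rewrite sqrtrM ?sqr_ge0 // sqrtr_sqr ger0_norm // normc_ge0.
Qed.

Lemma hnormZ_ge0 (c : R) x : 0 <= c -> `‖c%:C%C *: x‖ = c * `‖x‖.
Proof. by move=> c0; rewrite hnormZ normc_real ger0_norm. Qed.

Lemma hnorm_opp x : `‖- x‖ = `‖x‖.
Proof. by rewrite -scaleN1r hnormZ normcN complex.ComplexField.Normc.normc1 mul1r. Qed.

Lemma hnormBC x y : `‖x - y‖ = `‖y - x‖.
Proof. by rewrite -hnorm_opp opprB. Qed.

Lemma Re_ip_addZ (t : R) x y :
  complex.Re (ip (x + t%:C%C *: y) (x + t%:C%C *: y)) =
  complex.Re (ip x x) + 2 * t * complex.Re (ip x y) + t ^+ 2 * complex.Re (ip y y).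
Proof.
rewrite !ipDl !ipDr !ipZl !ipZr conj_Creal; last by apply/complex_realP; exists t.
have ReM (u : R) (w : C) : complex.Re (u%:C%C * w) = u * complex.Re w.
  by case: w => a b /=; rewrite mul0r subr0.
rewrite !raddfD /= !ReM (Re_ipC y x); lra.
Qed.

Lemma Re_ip_le x y : complex.Re (ip x y) <= `‖x‖ * `‖y‖.
Proof.
set A := complex.Re (ip x y).
have [y0|y_neq0] := eqVneq y 0; first by rewrite /A y0 ip0r hnorm0 mulr0.
have y2_gt0 : 0 < `‖y‖ ^+ 2 by rewrite exprn_gt0 // hnorm_gt0.
have := Re_ip_ge0 (x + (- A / `‖y‖ ^+ 2)%:C%C *: y).
rewrite Re_ip_addZ -!sqr_hnorm.
have -> : `‖x‖ ^+ 2 + 2 * (- A / `‖y‖ ^+ 2) * A + (- A / `‖y‖ ^+ 2) ^+ 2 * `‖y‖ ^+ 2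
    = `‖x‖ ^+ 2 - A ^+ 2 / `‖y‖ ^+ 2.
  by move: (hnorm_gt0 y_neq0); move: `‖x‖ `‖y‖ A => nx ny a ny0; field; rewrite gt_eqF.
rewrite subr_ge0 ler_pdivrMr // -exprMn => A2_le.
apply: le_trans (ler_norm A) _.
by rewrite -ler_sqr ?nnegrE ?mulr_ge0 ?hnorm_ge0 // real_normK ?num_real.
Qed.

Lemma hnorm_triangle x y : `‖x + y‖ <= `‖x‖ + `‖y‖.
Proof.
rewrite -ler_sqr ?nnegrE ?addr_ge0 ?hnorm_ge0 // sqr_hnorm.
have := Re_ip_addZ 1 x y; rewrite scale1r => ->.
rewrite -!sqr_hnorm sqrrD; have := Re_ip_le x y; lra.
Qed.

Lemma hnorm_small_eq0 x : (forall e, 0 < e -> `‖x‖ < e) -> x = 0.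
Proof.
move=> small; apply: hnorm_eq0; apply/eqP; rewrite eq_le hnorm_ge0 andbT.
by rewrite leNgt; apply/negP => /small; rewrite ltxx.
Qed.

End InnerProductSpace.

Section LinearMap.
Variables (K : pzRingType) (V : lmodType K) (f : V -> V).
Hypothesis f_lin : linear f.

Lemma lin0 : f 0 = 0.
Proof.
have := f_lin 1 0 0; rewrite !scale1r addr0 => f0.
by apply: (@addrI _ (f 0)); rewrite addr0 -f0.
Qed.

Lemma linD u v : f (u + v) = f u + f v.
Proof. by have := f_lin 1 u v; rewrite !scale1r. Qed.

Lemma linZ a u : f (a *: u) = a *: f u.
Proof. by have := f_lin a u 0; rewrite !addr0 lin0 addr0. Qed.

Lemma linN u : f (- u) = - f u.
Proof. by rewrite -scaleN1r linZ scaleN1r. Qed.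

Lemma linB u v : f (u - v) = f u - f v.
Proof. by rewrite linD linN. Qed.

End LinearMap.

Section OperatorNorm.
Variable R : realType.
Local Notation C := R[i].
Variable V : lmodType C.
Variable ip : V -> V -> C.
Hypothesis ipP : inner_product ip.
Local Notation "`‖ x ‖" := (hnorm ip x) (at level 0, x at level 99, format "`‖ x ‖").
Variable S : V -> V.
Hypothesis S_bounded : bounded_op ip S.

Let unit_ball_image := [set `‖S x‖ | x in [set x : V | `‖x‖ <= 1]].

Let unit_ball_image_ub : has_ubound unit_ball_image.
Proof.
have [_ [M SM]] := S_bounded; exists (Num.max M 0) => _ [x /= x1 <-].
apply: le_trans (SM x) _; rewrite le_max; have [M0|M0] := lerP 0 M.
  by apply/orP; left; rewrite -[leRHS]mulr1 ler_wpM2l.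
by rewrite nmulr_rle0 ?hnorm_ge0 ?orbT.
Qed.

Lemma op_norm_ge0 : 0 <= op_norm ip S.
Proof.
apply: le_trans (ub_le_sup unit_ball_image_ub _); last by exists 0; rewrite /= ?hnorm0.
by rewrite (lin0 S_bounded.1) hnorm0.
Qed.

Lemma hnorm_op_le x : `‖S x‖ <= op_norm ip S * `‖x‖.
Proof.
have [->|x_neq0] := eqVneq x 0; first by rewrite (lin0 S_bounded.1) !hnorm0 // mulr0.
have x_gt0 := hnorm_gt0 ipP x_neq0.
pose z := (`‖x‖^-1)%:C%C *: x.
have z1 : `‖z‖ = 1 by rewrite hnormZ_ge0 ?invr_ge0 ?hnorm_ge0 // mulVf // gt_eqF.
have : `‖S z‖ <= op_norm ip S.
  by apply: (ub_le_sup unit_ball_image_ub); exists z; rewrite /= ?z1.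
rewrite (linZ S_bounded.1) hnormZ_ge0 ?invr_ge0 ?hnorm_ge0 //.
by rewrite mulrC ler_pdivrMr.
Qed.

Lemma op_norm_le M : 0 <= M -> (forall x, `‖S x‖ <= M * `‖x‖) -> op_norm ip S <= M.
Proof.
move=> M0 SM; apply: ge_sup; first by exists `‖S 0‖, 0; rewrite /= ?hnorm0.
move=> _ [y /= y1 <-]; apply: le_trans (SM y) _.
by rewrite -[leRHS]mulr1 ler_wpM2l.
Qed.

End OperatorNorm.

Section Completeness.
Variable R : realType.
Local Notation C := R[i].
Variable V : lmodType C.
Variable ip : V -> V -> C.
Hypotheses (ipP : inner_product ip) (ip_complete : complete_ip ip).
Local Notation "`‖ x ‖" := (hnorm ip x) (at level 0, x at level 99, format "`‖ x ‖").
Local Notation half n := ((2^-1 : R) ^+ n).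

Lemma geometric_cauchy_limit (u : nat -> V) (c : nat -> R) :
  (forall n, 0 <= c n) -> (forall n, c n.+1 <= c n) ->
  (forall n, `‖u n.+1 - u n‖ <= c n * half n.+1) ->
  exists l, forall n, `‖l - u n‖ <= c n * half n.
Proof.
move=> c_ge0 c_dec u_step.
have c_anti n k : c (k + n)%N <= c n.
  by elim: k => [//|k IHk]; apply: le_trans (c_dec _) IHk.
have partial_sum n k : `‖u (k + n)%N - u n‖ <= c n * (half n - half (k + n)).
  elim: k => [|k IHk]; first by rewrite add0n !subrr hnorm0 // mulr0.
  rewrite addSn -(subrK (u (k + n)%N) (u _)) -addrA.
  apply: le_trans (hnorm_triangle ipP _ _) _; apply: le_trans (lerD (u_step _) IHk) _.
  have := ler_wpM2r (ltW (halfpow_gt0 R (k + n).+1)) (c_anti n k).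
  rewrite !halfpowS; have := c_ge0 n; nra.
have tail n m : (n <= m)%N -> `‖u m - u n‖ <= c n * half n.
  move=> /subnK <-; apply: le_trans (partial_sum _ _) _.
  by rewrite ler_wpM2l // lerBlDr lerDl ltW ?halfpow_gt0.
have [l u_to_l] : exists l, forall e, 0 < e -> exists N, forall n, (N <= n)%N -> `‖u n - l‖ < e.
  apply: ip_complete => e e0.
  have [N cN] := halfpow_lt (divr_gt0 e0 (ltr_pwDl ltr01 (c_ge0 0%N))).
  have N_small n : (N <= n)%N -> c n * half n < e.
    move=> Nn; rewrite ltr_pdivlMr ?ltr_pwDl ?c_ge0 // in cN.
    have := c_anti 0%N n; have := halfpow_leW R Nn; have := halfpow_gt0 R n.
    rewrite addn0; have := c_ge0 n; nra.
  exists N => m n Nm Nn; have [mn|nm] := leqP m n.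
    by rewrite hnormBC //; apply: le_lt_trans (tail _ _ mn) (N_small _ Nm).
  exact: le_lt_trans (tail _ _ (ltnW nm)) (N_small _ Nn).
exists l => n; apply/ler_addgt0Pr => e e0.
have [N hN] := u_to_l e e0; pose m := maxn N n.
rewrite -(subrK (u m) l) -addrA; apply: le_trans (hnorm_triangle ipP _ _) _.
rewrite [leLHS]addrC lerD ?tail ?leq_maxr //.
by rewrite hnormBC //; apply/ltW/hN/leq_maxl.
Qed.

Lemma contraction_fixpoint (phi : V -> V) :
  (forall a b, `‖phi a - phi b‖ <= 2^-1 * `‖a - b‖) -> exists z, phi z = z.
Proof.
move=> phi_contr; pose u n := iter n phi 0; pose c := 2 * `‖phi 0‖.
have c_ge0 : 0 <= c by rewrite mulr_ge0 ?hnorm_ge0.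
have u_step n : `‖u n.+1 - u n‖ <= c * half n.+1.
  have -> : c * half n.+1 = half n * `‖phi 0‖ by rewrite /c halfpowS; field.
  elim: n => [|n IHn]; first by rewrite expr0 mul1r subr0.
  apply: le_trans (phi_contr _ _) _; rewrite exprS -mulrA ler_wpM2l //.
have [z u_to_z] := @geometric_cauchy_limit u (fun=> c) (fun=> c_ge0) (fun=> lexx c) u_step.
exists z; apply/eqP; rewrite -subr_eq0; apply/eqP/(hnorm_small_eq0 ipP) => e e0.
have [n cn] := halfpow_lt (divr_gt0 e0 (ltr_pwDl ltr01 c_ge0)).
rewrite -(subrK (u n.+1) (phi z)) -addrA; apply: le_lt_trans (hnorm_triangle ipP _ _) _.
have step_close : `‖phi z - u n.+1‖ <= 2^-1 * (c * half n) := le_trans (phi_contr z (u n))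
  (ler_wpM2l (ltW (@halfpow_gt0 R 1)) (u_to_z n)).
rewrite [X in _ + X]hnormBC //.
apply: le_lt_trans (lerD step_close (u_to_z n.+1)) _.
rewrite ltr_pdivlMr ?ltr_pwDl // in cn; rewrite halfpowS.
have := halfpow_gt0 R n; have := c_ge0; nra.
Qed.

End Completeness.

Section Resolvent.
Variable R : realType.
Local Notation C := R[i].
Variable V : lmodType C.
Variable ip : V -> V -> C.
Hypotheses (ipP : inner_product ip) (ip_complete : complete_ip ip).
Local Notation "`‖ x ‖" := (hnorm ip x) (at level 0, x at level 99, format "`‖ x ‖").
Variable T : V -> V.
Hypothesis T_qnil : quasinilpotent ip T.
Local Notation res := (resolvent ip T).
Local Notation res_norm l := (op_norm ip (resolvent ip T l)).

Let T_lin : linear T := T_qnil.1.1.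

Lemma resolventP l : l != 0 -> is_inverse_op ip (shift_op l T) (res l).
Proof.
move=> l_neq0; apply: epsilon_spec; apply: contrapT => not_inv.
have : spectrum ip T l by [].
by rewrite T_qnil.2 => /eqP; rewrite (negbTE l_neq0).
Qed.

Section NonzeroPoint.
Variable l : C.
Hypothesis l_neq0 : l != 0.

Lemma resolvent_bounded : bounded_op ip (res l).
Proof. by have [] := resolventP l_neq0. Qed.

Lemma resolvent_linear : linear (res l).
Proof. exact: resolvent_bounded.1. Qed.

Lemma resolventK x : res l (l *: x - T x) = x.
Proof. by have [_ [resK _]] := resolventP l_neq0; exact: resK. Qed.

Lemma resolventVK x : l *: res l x - T (res l x) = x.
Proof. by have [_ [_ resVK]] := resolventP l_neq0; exact: resVK. Qed.

Lemma resolvent_norm_ge0 : 0 <= res_norm l.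
Proof. exact (op_norm_ge0 ipP resolvent_bounded). Qed.

Lemma hnorm_resolvent_le x : `‖res l x‖ <= res_norm l * `‖x‖.
Proof. exact (hnorm_op_le ipP resolvent_bounded x). Qed.

Lemma resolvent_neq0 x : x != 0 -> res l x != 0.
Proof.
by apply: contra_neq => res0; rewrite -(resolventVK x) res0 scaler0 (lin0 T_lin) subr0.
Qed.

Lemma resolvent_fixpointE x y : - T x = y -> x = res l (y + l *: x).
Proof. by move=> <-; rewrite addrC resolventK. Qed.

End NonzeroPoint.

(* A second resolvent identity in disguise: [res m = res l (1 + (l - m) res m)]. *)
Lemma resolvent_norm_near l m : l != 0 -> m != 0 ->
  normc (m - l) * res_norm l <= 2^-1 -> res_norm m <= 2 * res_norm l.
Proof.
move=> l_neq0 m_neq0 lm_close.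
apply: (op_norm_le ipP); first by rewrite mulr_ge0 ?resolvent_norm_ge0.
move=> y; set x := res m y.
have x_eq : x = res l (y + (l - m) *: x).
  rewrite -{1}(resolventK l_neq0 x); congr (res l _).
  by rewrite -{1}(resolventVK m_neq0 y) -/x scalerBl [RHS]addrC addrA subrK.
have : `‖x‖ <= res_norm l * (`‖y‖ + normc (m - l) * `‖x‖).
  rewrite {1}x_eq; apply: le_trans (hnorm_resolvent_le l_neq0 _) _.
  rewrite ler_wpM2l ?resolvent_norm_ge0 //; apply: le_trans (hnorm_triangle ipP _ _) _.
  by rewrite hnormZ // -normcN opprB.
have := ler_wpM2r (hnorm_ge0 ip x) lm_close.
have := hnorm_ge0 ip x; have := hnorm_ge0 ip y; have := resolvent_norm_ge0 l_neq0.
nra.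
Qed.

(* For such [l], [- T x = y] iff [x] is a fixed point of the contraction
   [z |-> res l (y + l *: z)]. *)
Section SmallResolvent.
Variable l : C.
Hypotheses (l_neq0 : l != 0) (l_small : normc l * res_norm l <= 2^-1).

Lemma negT_preimage_le x y : - T x = y -> `‖x‖ <= 2 * res_norm l * `‖y‖.
Proof.
move=> /(resolvent_fixpointE l_neq0) x_eq.
have : `‖x‖ <= res_norm l * (`‖y‖ + normc l * `‖x‖).
  rewrite {1}x_eq; apply: le_trans (hnorm_resolvent_le l_neq0 _) _.
  rewrite ler_wpM2l ?resolvent_norm_ge0 //; apply: le_trans (hnorm_triangle ipP _ _) _.
  by rewrite hnormZ.
have := ler_wpM2r (hnorm_ge0 ip x) l_small.
have := hnorm_ge0 ip x; have := hnorm_ge0 ip y; have := resolvent_norm_ge0 l_neq0.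
nra.
Qed.

Lemma negT_inj : injective (fun x => - T x).
Proof.
move=> a b /eqP; rewrite -subr_eq0 -opprD -(linN T_lin) -(linD T_lin) => /eqP ab0.
apply/eqP; rewrite -subr_eq0; apply/eqP/(hnorm_eq0 ipP).
apply/eqP; rewrite eq_le hnorm_ge0 andbT.
by apply: le_trans (negT_preimage_le ab0) _; rewrite hnorm0 // mulr0.
Qed.

Lemma negT_surj y : exists x, - T x = y.
Proof.
pose phi x := res l (y + l *: x).
have phi_contr a b : `‖phi a - phi b‖ <= 2^-1 * `‖a - b‖.
  rewrite /phi -(linB (resolvent_linear l_neq0)) opprD addrACA subrr add0r -scalerBr.
  apply: le_trans (hnorm_resolvent_le l_neq0 _) _; rewrite hnormZ // mulrA.
  by rewrite ler_wpM2r ?hnorm_ge0 // mulrC.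
have [z phi_z] := contraction_fixpoint ipP ip_complete phi_contr.
exists z; apply: (@addrI _ (l *: z)).
by have := resolventVK l_neq0 (y + l *: z); rewrite -/(phi z) phi_z => ->; rewrite addrC.
Qed.

Lemma shift0_invertible : invertible_op ip (shift_op 0 T).
Proof.
have shift0E x : shift_op 0 T x = - T x by rewrite /shift_op scale0r add0r.
pose S y := proj1_sig (cid (negT_surj y)).
have SK y : - T (S y) = y := proj2_sig (cid (negT_surj y)).
exists S; split; last by split=> x; rewrite shift0E //; apply: negT_inj; rewrite SK.
split; last by exists (2 * res_norm l) => y; apply: negT_preimage_le.
move=> a u v; apply: negT_inj.
by rewrite SK (linD T_lin) (linZ T_lin) opprD -scalerN !SK.
Qed.

End SmallResolvent.

Lemma resolvent_norm_unbounded K :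
  exists2 r : R, 0 < r & forall l, 0 < normc l < r -> K < res_norm l.
Proof.
apply: contrapT => bounded_near0.
pose K' := Num.max K 1.
have K'_gt0 : 0 < K' by rewrite lt_max ltr01 orbT.
have [l /andP[l_gt0 l_lt] resl_le] : exists2 l, 0 < normc l < (2 * K')^-1 & res_norm l <= K.
  apply: contrapT => no_l; apply: bounded_near0; exists (2 * K')^-1.
    by rewrite invr_gt0 mulr_gt0.
  move=> l l_range; rewrite ltNge; apply/negP => resl_le; apply: no_l; by exists l.
have l_neq0 := normc_gt0_neq0 l_gt0.
have : ~ invertible_op ip (shift_op 0 T) by have : spectrum ip T 0 by rewrite T_qnil.2.
apply; apply: (shift0_invertible l_neq0).
have K_le : K <= K' by rewrite le_max lexx.
rewrite -[_^-1]div1r ltr_pdivlMr ?mulr_gt0 // in l_lt.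
have := resolvent_norm_ge0 l_neq0; have := le_trans resl_le K_le; nra.
Qed.

Lemma resolvent_norm_bounded_annulus rho : 0 < rho ->
  exists M, forall l, rho <= normc l <= 1 -> res_norm l <= M.
Proof.
move=> rho_gt0; apply: contrapT => unbounded.
have lam_spec n : exists l, rho <= normc l <= 1 /\ n%:R < res_norm l.
  apply: contrapT => no_l; apply: unbounded; exists n%:R => l l_range.
  by rewrite leNgt; apply/negP => lt_n; apply: no_l; exists l.
have [lam lamP] := choice lam_spec.
have lam_le1 n : normc (lam n) <= 1 by case/andP: (lamP n).1.
have [p p_cluster] := normc_cluster lam_le1.
pose beta := res_norm p.
pose e := Num.min (rho / 2) (2 * (`|beta| + 1))^-1.
have e_gt0 : 0 < e by rewrite lt_min divr_gt0 // invr_gt0 mulr_gt0 // ltr_pwDr ?normr_ge0.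
have [n n_large lam_close] := p_cluster e e_gt0 (Num.truncn (2 * `|beta|)).+1.
have [/andP[rho_le _] lam_large] := lamP n.
have p_neq0 : p != 0.
  apply: normc_gt0_neq0; have := le_normcD p (lam n - p); rewrite addrC subrK.
  have : e <= rho / 2 by rewrite ge_min lexx.
  lra.
have lam_neq0 : lam n != 0 by apply: normc_gt0_neq0; apply: lt_le_trans rho_le.
have beta_ge0 : 0 <= beta := resolvent_norm_ge0 p_neq0.
have : normc (lam n - p) * beta <= 2^-1.
  have : e <= (2 * (`|beta| + 1))^-1 by rewrite ge_min lexx orbT.
  rewrite -[_^-1]div1r ler_pdivlMr ?mulr_gt0 ?ltr_pwDr ?normr_ge0 // ger0_norm //.
  have := normc_ge0 (lam n - p); nra.
move=> /(resolvent_norm_near p_neq0 lam_neq0).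
have : (Num.truncn (2 * `|beta|)).+1%:R <= n%:R :> R by rewrite ler_nat.
have := truncnS_gt (2 * `|beta|); rewrite ger0_norm //.
have := lam_large; rewrite -/beta.
lra.
Qed.

End Resolvent.

Section LimsupAt0.
Variable R : realType.
Local Notation C := R[i].
Variable q : C -> R.

Definition limsup_at0 : \bar R :=
  ereal_inf [set ereal_sup [set (q l)%:E | l in [set l : C | 0 < normc l < r]]
            | r in [set r : R | 0 < r]].

Lemma limsup_at0_le s :
  (forall e, 0 < e -> exists2 r, 0 < r & forall l, 0 < normc l < r -> q l <= s + e) ->
  (limsup_at0 <= s%:E)%E.
Proof.
move=> near_le; apply/lee_addgt0Pr => e e0; have [r r0 qle] := near_le e e0.
apply: le_trans (ereal_inf_lbound _) _; first by exists r.
apply: ge_ereal_sup => _ [l l_near <-].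
by rewrite -EFinD lee_fin; apply: qle.
Qed.

Lemma limsup_at0_ge s :
  (forall e r, 0 < e -> 0 < r -> exists2 l, 0 < normc l < r & s - e <= q l) ->
  (s%:E <= limsup_at0)%E.
Proof.
move=> freq_ge; apply: le_ereal_inf_tmp => _ [r r0 <-].
apply/lee_subgt0Pr => e e0; have [l l_near qge] := freq_ge e r e0 r0.
apply: (@le_trans _ _ (q l)%:E); first by rewrite -EFinB lee_fin.
by apply: ereal_sup_ubound; exists l.
Qed.

Lemma limsup_at0_lt t : (limsup_at0 < t%:E)%E ->
  exists2 r, 0 < r & forall l, 0 < normc l < r -> q l < t.
Proof.
move=> /ereal_inf_lt [_ [r r0 <-] sup_lt]; exists r => // l l_near.
by rewrite -lte_fin; apply: le_lt_trans sup_lt; apply: ereal_sup_ubound; exists l.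
Qed.

Lemma limsup_at0_gt t : (t%:E < limsup_at0)%E ->
  forall r, 0 < r -> exists2 l, 0 < normc l < r & t < q l.
Proof.
move=> t_lt r r0; have /ereal_sup_gt [_ [l l_near <-]] : (t%:E < ereal_sup
    [set (q l)%:E | l in [set l : C | (0 < normc l < r)%R]])%E.
  by apply: lt_le_trans t_lt _; apply: ereal_inf_lbound; exists r.
by rewrite lte_fin; exists l.
Qed.

End LimsupAt0.

Section PowerQuotient.
Variable R : realType.
Local Notation C := R[i].
Variable V : lmodType C.
Variable ip : V -> V -> C.
Hypotheses (ipP : inner_product ip) (ip_complete : complete_ip ip).
Local Notation "`‖ x ‖" := (hnorm ip x) (at level 0, x at level 99, format "`‖ x ‖").
Variable T : V -> V.
Hypothesis T_qnil : quasinilpotent ip T.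
Local Notation res := (resolvent ip T).
Local Notation res_norm l := (op_norm ip (resolvent ip T l)).

Lemma k_xE x : k_x ip T x = limsup_at0 (power_quotient ip T x).
Proof. by []. Qed.

Lemma ln_resolvent_norm_unbounded c :
  exists2 r, 0 < r & forall l, 0 < normc l < r -> 1 < res_norm l /\ c < ln (res_norm l).
Proof.
have [r r0 large] := resolvent_norm_unbounded ipP ip_complete T_qnil (Num.max 1 (expR c)).
exists r => // l /large; rewrite gt_max => /andP[res_gt1 res_gt]; split => //.
by rewrite -[c]expRK ltr_ln ?posrE ?expR_gt0 // (lt_trans ltr01).
Qed.

Lemma hnorm_resolvent_gt0 l x : 0 < normc l -> x != 0 -> 0 < `‖res l x‖.
Proof. by move=> /normc_gt0_neq0 l_neq0 x_neq0; apply/(hnorm_gt0 ipP)/resolvent_neq0. Qed.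

Lemma k_x_le1 x : x != 0 -> (k_x ip T x <= 1%:E)%E.
Proof.
move=> x_neq0; apply: limsup_at0_le => e e0.
have [r r0 large] := ln_resolvent_norm_unbounded (`|ln `‖x‖| / e).
exists r => // l l_near; have [res_gt1 ln_gt] := large l l_near.
have [l_gt0 _] := andP l_near; have l_neq0 := normc_gt0_neq0 l_gt0.
have L_gt0 : 0 < ln (res_norm l) by rewrite ln_gt0.
have res_gt0 := lt_trans ltr01 res_gt1; have x_gt0 := hnorm_gt0 ipP x_neq0.
rewrite /power_quotient ler_pdivrMr // mulrDl mul1r.
have : ln `‖res l x‖ <= ln (res_norm l) + ln `‖x‖.
  rewrite -lnM ?posrE // ler_ln ?posrE ?mulr_gt0 ?hnorm_resolvent_gt0 //.
  exact: hnorm_resolvent_le.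
have : `|ln `‖x‖| <= e * ln (res_norm l) by rewrite -ler_pdivrMl // mulrC ltW.
have := ler_norm (ln `‖x‖); lra.
Qed.

End PowerQuotient.

Section LogQuotient.
Variable R : realType.

Lemma ln_div_lt (f L w : R) : 0 < f -> 0 < L -> (ln f / L < w) = (f < expR (w * L)).
Proof. by move=> f0 L0; rewrite ltr_pdivrMr // -[f in RHS]lnK ?posrE // ltr_expR. Qed.

Lemma ln_div_le (f L w : R) : 0 < f -> 0 < L -> (ln f / L <= w) = (f <= expR (w * L)).
Proof. by move=> f0 L0; rewrite ler_pdivrMr // -[f in RHS]lnK ?posrE // ler_expR. Qed.

Lemma ln_div_ge (f L w : R) : 0 < f -> 0 < L -> (w <= ln f / L) = (expR (w * L) <= f).
Proof. by move=> f0 L0; rewrite ler_pdivlMr // -[f in RHS]lnK ?posrE // ler_expR. Qed.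

Lemma ln_div_gt (f L w : R) : 0 < f -> 0 < L -> (w < ln f / L) = (expR (w * L) < f).
Proof. by move=> f0 L0; rewrite ltr_pdivlMr // -[f in RHS]lnK ?posrE // ltr_expR. Qed.

End LogQuotient.

Section Construction.
Variable R : realType.
Local Notation C := R[i].
Variable V : lmodType C.
Variable ip : V -> V -> C.
Hypotheses (ipP : inner_product ip) (ip_complete : complete_ip ip).
Local Notation "`‖ x ‖" := (hnorm ip x) (at level 0, x at level 99, format "`‖ x ‖").
Local Notation half n := ((2^-1 : R) ^+ n).
Variable T : V -> V.
Hypothesis T_qnil : quasinilpotent ip T.
Local Notation res := (resolvent ip T).
Local Notation res_norm l := (op_norm ip (resolvent ip T l)).
Local Notation Q := (power_quotient ip T).

Variable s : R.
Hypothesis s_le1 : s <= 1.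
Variables (y : nat -> R) (xs : nat -> V).
Hypotheses (y_incr : forall n, y n < y n.+1) (y_lt : forall n, y n < s).
Hypothesis y_gt : forall n, s - half n < y n.
Hypotheses (xs_neq0 : forall n, xs n != 0) (k_xs : forall n, k_x ip T (xs n) = (y n)%:E).

Definition res_pow (w : R) (l : C) : R := expR (w * ln (res_norm l)).

Lemma res_pow_gt0 w l : 0 < res_pow w l.
Proof. exact: expR_gt0. Qed.

Definition r_log : R := s2val (cid2 (ln_resolvent_norm_unbounded ipP ip_complete T_qnil 0)).

Lemma r_log_gt0 : 0 < r_log.
Proof. exact: (s2valP (cid2 (ln_resolvent_norm_unbounded ipP ip_complete T_qnil 0))). Qed.

Lemma r_logP l : 0 < normc l < r_log -> 1 < res_norm l /\ 0 < ln (res_norm l).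
Proof. exact: (s2valP' (cid2 (ln_resolvent_norm_unbounded ipP ip_complete T_qnil 0))). Qed.

Let k_xs_lt j : (limsup_at0 (Q (xs j)) < s%:E)%E.
Proof. by rewrite -k_xE k_xs lte_fin. Qed.

Definition r_below (j : nat) : R := s2val (cid2 (limsup_at0_lt (k_xs_lt j))).

Lemma r_below_gt0 j : 0 < r_below j.
Proof. exact: (s2valP (cid2 (limsup_at0_lt (k_xs_lt j)))). Qed.

Lemma r_belowP j l : 0 < normc l < r_below j -> Q (xs j) l < s.
Proof. exact: (s2valP' (cid2 (limsup_at0_lt (k_xs_lt j)))). Qed.

Fixpoint rho n : R :=
  if n is m.+1 then Num.min (Num.min (rho m) (half n)) (r_below m) else Num.min 1 r_log.

Lemma rho_gt0 n : 0 < rho n.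
Proof.
by elim: n => [|n IHn] /=; rewrite !lt_min ?ltr01 ?r_log_gt0 ?IHn ?halfpow_gt0 ?r_below_gt0.
Qed.

Lemma rho_leW m n : (m <= n)%N -> rho n <= rho m.
Proof.
move=> /subnK <-; elim: (n - m)%N => [//|k IHk].
by apply: le_trans IHk; rewrite /= !ge_min lexx.
Qed.

Lemma rho_le_half n : rho n <= half n.
Proof. by case: n => [|n] /=; rewrite !ge_min lexx ?orbT. Qed.

Lemma rho_le_r_log n : rho n <= r_log.
Proof. by apply: le_trans (rho_leW (leq0n n)) _; rewrite /= ge_min lexx orbT. Qed.

Lemma rho_le1 n : rho n <= 1.
Proof. by apply: le_trans (rho_leW (leq0n n)) _; rewrite /= ge_min lexx. Qed.

Lemma rho_le_r_below j n : (j < n)%N -> rho n <= r_below j.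
Proof. by move=> jn; apply: le_trans (rho_leW jn) _; rewrite /= ge_min lexx orbT. Qed.

Lemma rho_annulus t : 0 < t < rho 0 -> exists n, rho n.+1 <= t < rho n.
Proof.
case/andP=> t_gt0 t_lt.
have rho_le : exists n, rho n <= t.
  by have [n ht] := halfpow_lt t_gt0; exists n; exact/ltW/(le_lt_trans (rho_le_half n) ht).
case: (ex_minnP rho_le) => -[|n] rho_n_le n_min; first by move: t_lt; rewrite ltNge rho_n_le.
by exists n; rewrite rho_n_le /= ltNge; apply/negP => /n_min; rewrite ltnn.
Qed.

Definition annulus_bound n : R :=
  proj1_sig (cid (resolvent_norm_bounded_annulus ipP T_qnil (rho_gt0 n.+1))).

Lemma annulus_boundP n l : rho n.+1 <= normc l <= 1 -> res_norm l <= annulus_bound n.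
Proof.
exact: (proj2_sig (cid (resolvent_norm_bounded_annulus ipP T_qnil (rho_gt0 n.+1)))).
Qed.

(* A tail of norm at most [theta n] contributes at most [‖(l - T)^-1‖ ^ s] on the
   [n]-th annulus. *)
Definition theta n : R := expR ((s - 1) * ln (annulus_bound n)).

Lemma theta_gt0 n : 0 < theta n.
Proof. exact: expR_gt0. Qed.

Lemma res_powD v w l : res_pow (v + w) l = res_pow v l * res_pow w l.
Proof. by rewrite /res_pow mulrDl expRD. Qed.

Lemma res_pow1 l : 0 < res_norm l -> res_pow 1 l = res_norm l.
Proof. by move=> res_gt0; rewrite /res_pow mul1r lnK. Qed.

Definition y_prev m : R := if m is k.+1 then y k else y 0%N - 1.
Definition w_lo m : R := (y_prev m + y m) / 2.
Definition w_hi m : R := (w_lo m + y m) / 2.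

Lemma y_prev_lt m : y_prev m < y m.
Proof. by case: m => [|m] /=; [lra | exact: y_incr]. Qed.

Lemma y_prev_lt_w_lo m : y_prev m < w_lo m.
Proof. by have := y_prev_lt m; rewrite /w_lo; lra. Qed.

Lemma w_lo_lt_hi m : w_lo m < w_hi m.
Proof. by have := y_prev_lt m; rewrite /w_hi /w_lo; lra. Qed.

Lemma w_hi_lt m : w_hi m < y m.
Proof. by have := y_prev_lt m; rewrite /w_hi /w_lo; lra. Qed.

Definition coef m (P : R) : R := Num.min (half m.+1) (half m.+1 * P / `‖xs m‖).

(* The last two conditions ask [‖(l - T)^-1‖] to be large enough to absorb the
   constants [4 / a] and [2 / a]. *)
Definition good_point m (S : V) (a : R) (l : C) : Prop :=
  [/\ 0 < normc l < half m, normc l < r_log, `‖res l S‖ <= res_pow (w_lo m) l,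
      res_pow (w_hi m) l < `‖res l (xs m)‖ &
      4 / a <= res_pow (w_hi m - w_lo m) l /\ 2 / a <= res_pow (half m) l].

Definition pick_point m S a : C := epsilon (inhabits 0) (good_point m S a).

(* A tail of norm at most [tail_bound m a l] contributes at most
   [a / 4 * ‖(l - T)^-1‖ ^ w_hi m] at [l]. *)
Definition tail_bound m (a : R) (l : C) : R := a / 4 * res_pow (w_hi m - 1) l.

(* The second component of the state is the minimum of the tail bounds imposed so far. *)
Definition step m (st : V * R) : V * R :=
  let P := Num.min st.2 (theta m) in
  let a := coef m P in
  (st.1 + a%:C%C *: xs m, Num.min P (tail_bound m a (pick_point m st.1 a))).

Fixpoint state m : V * R := if m is k.+1 then step k (state k) else (0, 1).

Definition psum m : V := (state m).1.
Definition budget m : R := Num.min (state m).2 (theta m).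
Definition weight m : R := coef m (budget m).
Definition lam m : C := pick_point m (psum m) (weight m).

Lemma psumS m : psum m.+1 = psum m + (weight m)%:C%C *: xs m.
Proof. by []. Qed.

Lemma budgetS m :
  budget m.+1 = Num.min (Num.min (budget m) (tail_bound m (weight m) (lam m))) (theta m.+1).
Proof. by []. Qed.

Lemma budget_le_theta m : budget m <= theta m.
Proof. by rewrite /budget ge_min lexx orbT. Qed.

Lemma budget_le_tail m : budget m.+1 <= tail_bound m (weight m) (lam m).
Proof. by rewrite budgetS 2!ge_min lexx !orbT. Qed.

Lemma budget_leS m : budget m.+1 <= budget m.
Proof. by rewrite budgetS 2!ge_min lexx. Qed.

Lemma coef_gt0 m P : 0 < P -> 0 < coef m P.
Proof.
move=> P_gt0; rewrite lt_min halfpow_gt0 divr_gt0 ?mulr_gt0 ?halfpow_gt0 //.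
exact (hnorm_gt0 ipP (xs_neq0 m)).
Qed.

Lemma coef_le m P : coef m P <= half m.+1.
Proof. by rewrite /coef ge_min lexx. Qed.

Lemma coef_hnorm_le m P : coef m P * `‖xs m‖ <= half m.+1 * P.
Proof. by rewrite -(ler_pdivlMr _ _ (hnorm_gt0 ipP (xs_neq0 m))) /coef ge_min lexx orbT. Qed.

Lemma budget_gt0 m : 0 < budget m.
Proof.
elim: m => [|m b_gt0]; first by rewrite /budget /= lt_min ltr01 theta_gt0.
have tail_gt0 : 0 < tail_bound m (weight m) (lam m).
  by rewrite mulr_gt0 ?res_pow_gt0 // divr_gt0 // coef_gt0.
by rewrite budgetS 2!lt_min b_gt0 tail_gt0 theta_gt0.
Qed.

Lemma weight_gt0 m : 0 < weight m.
Proof. exact/coef_gt0/budget_gt0. Qed.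

Lemma psum_cvg : exists x, forall n, `‖x - psum n‖ <= budget n * half n.
Proof.
apply: (geometric_cauchy_limit ipP ip_complete) => [n|n|n].
- exact/ltW/budget_gt0.
- exact: budget_leS.
rewrite psumS addrAC subrr add0r hnormZ_ge0 ?(ltW (weight_gt0 _)) // [leRHS]mulrC.
exact: coef_hnorm_le.
Qed.

Definition xlim : V := proj1_sig (cid psum_cvg).

Lemma xlim_tail n : `‖xlim - psum n‖ <= budget n.
Proof.
apply: le_trans (proj2_sig (cid psum_cvg) n) _.
by rewrite ler_piMr ?(ltW (budget_gt0 n)) ?halfpow_le1.
Qed.

Section NearZero.
Variable l : C.
Hypothesis l_gt0 : 0 < normc l.
Let l_neq0 : l != 0 := normc_gt0_neq0 l_gt0.
Let res_lin := resolvent_linear T_qnil l_neq0.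

Lemma hnorm_res0 : `‖res l 0‖ = 0.
Proof. by rewrite (lin0 res_lin) hnorm0. Qed.

Lemma hnorm_resD u v : `‖res l (u + v)‖ <= `‖res l u‖ + `‖res l v‖.
Proof. by rewrite (linD res_lin); exact: hnorm_triangle. Qed.

Lemma hnorm_resB u v : `‖res l (u - v)‖ <= `‖res l u‖ + `‖res l v‖.
Proof. by apply: le_trans (hnorm_resD _ _) _; rewrite (linN res_lin) hnorm_opp. Qed.

Lemma hnorm_resZ (a : R) v : 0 <= a -> `‖res l (a%:C%C *: v)‖ = a * `‖res l v‖.
Proof. by move=> a_ge0; rewrite (linZ res_lin) hnormZ_ge0. Qed.

Lemma hnorm_res_le_approx u v : `‖res l u‖ <= `‖res l v‖ + res_norm l * `‖u - v‖.
Proof.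
rewrite -{1}(subrKC v u) (linD res_lin); apply: le_trans (hnorm_triangle ipP _ _) _.
by rewrite lerD2l hnorm_resolvent_le.
Qed.

End NearZero.

Lemma hnorm_res_psumS m w l : 0 < normc l < r_log -> Q (xs m) l < w ->
  `‖res l (psum m)‖ <= (1 - half m) * res_pow w l ->
  `‖res l (psum m.+1)‖ <= (1 - half m.+1) * res_pow w l.
Proof.
move=> l_near; have [l_gt0 _] := andP l_near; have [_ L_gt0] := r_logP l_near.
rewrite /power_quotient ln_div_lt ?hnorm_resolvent_gt0 ?xs_neq0 // => xs_small S_le.
rewrite -/(res_pow w l) in xs_small.
rewrite psumS; apply: le_trans (hnorm_resD l_gt0 _ _) _.
rewrite hnorm_resZ ?(ltW (weight_gt0 m)) //.
have := ler_wpM2l (ltW (weight_gt0 m)) (ltW xs_small).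
have : weight m <= half m.+1 := coef_le m (budget m).
rewrite halfpowS; have := res_pow_gt0 w l; have := halfpow_gt0 R m; nra.
Qed.

Lemma hnorm_res_psum_near m w : y_prev m < w ->
  exists2 r, 0 < r & forall l, 0 < normc l < r ->
    `‖res l (psum m)‖ <= (1 - half m) * res_pow w l.
Proof.
elim: m w => [|m IHm] w w_gt.
  exists 1 => [//|l /andP[l_gt0 _]].
  by rewrite (hnorm_res0 l_gt0) expr0 subrr mul0r.
have [r1 r1_gt0 near1] := IHm w (lt_trans (y_prev_lt m) w_gt).
have k_xs_lt_w : (limsup_at0 (Q (xs m)) < w%:E)%E by rewrite -k_xE k_xs lte_fin.
have [r2 r2_gt0 near2] := limsup_at0_lt k_xs_lt_w.
exists (Num.min (Num.min r1 r2) r_log); first by rewrite !lt_min r1_gt0 r2_gt0 r_log_gt0.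
move=> l /andP[l_gt0]; rewrite !lt_min => /andP[/andP[lr1 lr2] lr3].
by apply: hnorm_res_psumS; rewrite ?l_gt0 ?near1 ?near2 ?l_gt0.
Qed.

Lemma hnorm_res_psum_annulus n l : 0 < normc l < rho n ->
  `‖res l (psum n)‖ <= (1 - half n) * res_pow s l.
Proof.
elim: n l => [|n IHn] l /andP[l_gt0 l_lt].
  by rewrite (hnorm_res0 l_gt0) expr0 subrr mul0r.
apply: hnorm_res_psumS.
- by rewrite l_gt0 (lt_le_trans l_lt (rho_le_r_log _)).
- by apply: r_belowP; rewrite l_gt0 (lt_le_trans l_lt (rho_le_r_below (ltnSn n))).
- by apply: IHn; rewrite l_gt0 (lt_le_trans l_lt (rho_leW (leqnSn n))).
Qed.

Lemma good_point_exists m : exists l, good_point m (psum m) (weight m) l.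
Proof.
set a := weight m; have a_gt0 : 0 < a := weight_gt0 m.
have [r1 r1_gt0 near1] := hnorm_res_psum_near (y_prev_lt_w_lo m).
have w_gap : 0 < w_hi m - w_lo m by rewrite subr_gt0 w_lo_lt_hi.
have [r2 r2_gt0 near2] := ln_resolvent_norm_unbounded ipP ip_complete T_qnil
  (Num.max (ln (4 / a) / (w_hi m - w_lo m)) (ln (2 / a) / half m)).
have k_gt : ((w_hi m)%:E < limsup_at0 (Q (xs m)))%E by rewrite -k_xE k_xs lte_fin w_hi_lt.
have r_gt0 : 0 < Num.min (Num.min (Num.min r1 r2) (half m)) r_log.
  by rewrite !lt_min r1_gt0 r2_gt0 halfpow_gt0 r_log_gt0.
have [l /andP[l_gt0 l_lt] Q_gt] := limsup_at0_gt k_gt r_gt0.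
move: l_lt; rewrite !lt_min => /andP[/andP[/andP[lr1 lr2] lr3] lr4].
have [res_gt1 L_large] := near2 l (introT andP (conj l_gt0 lr2)).
have L_gt0 : 0 < ln (res_norm l) by rewrite ln_gt0.
rewrite gt_max !ltr_pdivrMr ?halfpow_gt0 // in L_large; case/andP: L_large => L4 L2.
exists l; split.
- by rewrite l_gt0.
- exact: lr4.
- apply: le_trans (near1 l (introT andP (conj l_gt0 lr1))) _.
  by rewrite ler_piMl ?(ltW (res_pow_gt0 _ _)) // lerBlDr lerDl ltW ?halfpow_gt0.
- by move: Q_gt; rewrite /power_quotient ln_div_gt ?hnorm_resolvent_gt0 ?xs_neq0.
- split.
    by rewrite /res_pow -[4 / a]lnK ?posrE ?divr_gt0 // ler_expR [leRHS]mulrC ltW.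
  by rewrite /res_pow -[2 / a]lnK ?posrE ?divr_gt0 // ler_expR [leRHS]mulrC ltW.
Qed.

Lemma lamP m : good_point m (psum m) (weight m) (lam m).
Proof. by apply: epsilon_spec; exact: good_point_exists. Qed.

Lemma hnorm_res_xlim_lam m : weight m / 2 * res_pow (w_hi m) (lam m) <= `‖res (lam m) xlim‖.
Proof.
have [/andP[l_gt0 _] l_small S_le xs_large [gap_large _]] := lamP m.
set l := lam m in l_gt0 l_small S_le xs_large gap_large *.
set a := weight m; have a_gt0 : 0 < a := weight_gt0 m.
have [res_gt1 _] := r_logP (introT andP (conj l_gt0 l_small)).
have res_gt0 := lt_trans ltr01 res_gt1.
have psumS_ge : a * `‖res l (xs m)‖ <= `‖res l (psum m.+1)‖ + `‖res l (psum m)‖.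
  rewrite -hnorm_resZ ?(ltW a_gt0) //.
  have -> : a%:C%C *: xs m = psum m.+1 - psum m by rewrite psumS addrAC subrr add0r.
  exact: hnorm_resB.
have tail_le : res_norm l * `‖psum m.+1 - xlim‖ <= a / 4 * res_pow (w_hi m) l.
  rewrite hnormBC //; apply: le_trans (ler_wpM2l (ltW res_gt0) (xlim_tail _)) _.
  apply: le_trans (ler_wpM2l (ltW res_gt0) (budget_le_tail m)) _.
  by rewrite /tail_bound -(res_pow1 res_gt0) mulrCA -res_powD addrC subrK.
have lo_le : res_pow (w_lo m) l <= a / 4 * res_pow (w_hi m) l.
  rewrite -(subrK (w_lo m) (w_hi m)) res_powD.
  rewrite ler_pdivrMr // -/a in gap_large; have := res_pow_gt0 (w_lo m) l; nra.
have := hnorm_res_le_approx l_gt0 (psum m.+1) xlim.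
have := ler_wpM2l (ltW a_gt0) (ltW xs_large).
lra.
Qed.

Lemma Q_xlim_lam m : w_hi m - half m <= Q xlim (lam m).
Proof.
have [/andP[l_gt0 _] l_small _ _ [_ half_large]] := lamP m.
have [_ L_gt0] := r_logP (introT andP (conj l_gt0 l_small)).
have x_large := hnorm_res_xlim_lam m.
have a_gt0 := weight_gt0 m.
have pw_gt0 := res_pow_gt0 (w_hi m - half m) (lam m).
rewrite /power_quotient ln_div_ge ?(lt_le_trans _ x_large) ?mulr_gt0 ?divr_gt0 ?res_pow_gt0 //.
apply: le_trans x_large; rewrite -/(res_pow (w_hi m - half m) (lam m)).
have -> : res_pow (w_hi m) (lam m) = res_pow (w_hi m - half m) (lam m) * res_pow (half m) (lam m).
  by rewrite -res_powD subrK.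
rewrite ler_pdivrMr // in half_large; nra.
Qed.

Lemma xlim_neq0 : xlim != 0.
Proof.
have [/andP[l_gt0 _] _ _ _ _] := lamP 0.
apply/eqP => x0; have := hnorm_res_xlim_lam 0; rewrite x0 (hnorm_res0 l_gt0).
by rewrite lt_geF // !mulr_gt0 ?divr_gt0 ?weight_gt0 ?res_pow_gt0.
Qed.

Lemma res_norm_theta_le n l : 0 < normc l -> rho n.+1 <= normc l < rho n ->
  res_norm l * theta n <= res_pow s l.
Proof.
move=> l_gt0 /andP[rho_le l_lt].
have [res_gt1 L_gt0] := r_logP (introT andP (conj l_gt0 (lt_le_trans l_lt (rho_le_r_log n)))).
have res_gt0 := lt_trans ltr01 res_gt1.
have res_le : res_norm l <= annulus_bound n.
  by apply: annulus_boundP; rewrite rho_le (le_trans (ltW l_lt) (rho_le1 n)).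
rewrite -[s](subrK 1) res_powD res_pow1 // [leRHS]mulrC ler_wpM2l ?(ltW res_gt0) //.
rewrite /theta /res_pow ler_expR ler_wnM2l ?subr_le0 //.
by rewrite ler_ln ?posrE ?(lt_le_trans res_gt0).
Qed.

Lemma Q_xlim_le e : 0 < e ->
  exists2 r, 0 < r & forall l, 0 < normc l < r -> Q xlim l <= s + e.
Proof.
move=> e_gt0.
have [r r_gt0 large] := ln_resolvent_norm_unbounded ipP ip_complete T_qnil (ln 2 / e).
exists (Num.min (rho 0) r); first by rewrite lt_min rho_gt0 r_gt0.
move=> l /andP[l_gt0]; rewrite lt_min => /andP[l_lt0 l_ltr].
have [res_gt1 L_large] := large l (introT andP (conj l_gt0 l_ltr)).
have L_gt0 : 0 < ln (res_norm l) by rewrite ln_gt0.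
have [n /andP[rho_le l_lt]] := rho_annulus (introT andP (conj l_gt0 l_lt0)).
have psum_le := hnorm_res_psum_annulus (introT andP (conj l_gt0 l_lt)).
have tail_le : res_norm l * `‖xlim - psum n‖ <= res_pow s l.
  apply: le_trans (res_norm_theta_le l_gt0 (introT andP (conj rho_le l_lt))).
  rewrite ler_wpM2l ?(ltW (lt_trans ltr01 res_gt1)) //.
  exact: le_trans (xlim_tail n) (budget_le_theta n).
have x_le : `‖res l xlim‖ <= 2 * res_pow s l.
  apply: le_trans (hnorm_res_le_approx l_gt0 xlim (psum n)) _.
  have := halfpow_gt0 R n; have := res_pow_gt0 s l; nra.
rewrite /power_quotient ln_div_le ?hnorm_resolvent_gt0 ?xlim_neq0 //.
apply: le_trans x_le _; rewrite -/(res_pow (s + e) l) res_powD mulrC ler_pM2l ?res_pow_gt0 //.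
rewrite /res_pow -[2]lnK ?posrE // ler_expR.
by rewrite ltr_pdivrMr // in L_large; rewrite mulrC ltW.
Qed.

Lemma k_x_xlim : k_x ip T xlim = s%:E.
Proof.
apply/eqP; rewrite eq_le k_xE (limsup_at0_le Q_xlim_le) /=.
apply: limsup_at0_ge => e r e_gt0 r_gt0.
have min_gt0 : 0 < Num.min (e / 2) r by rewrite lt_min divr_gt0.
have [n] := halfpow_lt min_gt0; rewrite lt_min => /andP[half_e half_r].
have [/andP[l_gt0 l_lt] _ _ _ _] := lamP n.+1.
exists (lam n.+1).
  by rewrite l_gt0 (lt_trans l_lt (le_lt_trans (halfpow_leW R (leqnSn n)) half_r)).
apply: le_trans (Q_xlim_lam n.+1).
have := y_gt n; have := y_prev_lt_w_lo n.+1; have := w_lo_lt_hi n.+1.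
have := halfpow_leW R (leqnSn n); rewrite /=; lra.
Qed.

End Construction.

Lemma ereal_sup_not_attained_fin (R : realType) (Y : set (\bar R)) (c : R) :
  Y !=set0 -> (forall z, Y z -> (z <= c%:E)%E) -> ~ Y (ereal_sup Y) ->
  exists s : R, ereal_sup Y = s%:E.
Proof.
move=> [z0 Yz0] Y_le not_attained.
move: (ereal_sup_ubound Yz0) (ge_ereal_sup Y_le) not_attained.
case: (ereal_sup Y) => [s _ _ _| _ | ]; first by exists s.
  by rewrite leye_eq.
by rewrite leeNy_eq => /eqP z0_ninfty _; rewrite -z0_ninfty.
Qed.

Lemma ereal_sup_not_attained_seq (R : realType) (Y : set (\bar R)) (s : R) :
  ereal_sup Y = s%:E -> ~ Y s%:E ->
  exists y : nat -> R, [/\ forall n, Y (y n)%:E, forall n, y n < y n.+1,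
    forall n, y n < s & forall n, s - (2^-1) ^+ n < y n].
Proof.
move=> sup_s not_attained.
pose spec n t z := [/\ Y z%:E, Num.max t (s - (2^-1) ^+ n) < z & z < s].
have next n t : t < s -> exists z, spec n t z.
  move=> t_lt; have : ((Num.max t (s - (2^-1) ^+ n))%:E < ereal_sup Y)%E.
    by rewrite sup_s lte_fin gt_max t_lt ltrBlDr ltrDl halfpow_gt0.
  move=> /ereal_sup_gt[[z| |] Yz z_gt]; last 2 first.
  - by have := ereal_sup_ubound Yz; rewrite sup_s leye_eq.
  - by move: z_gt; rewrite ltNge leNye.
  exists z; split=> //; rewrite -lte_fin -sup_s lt_neqAle ereal_sup_ubound // andbT.
  by apply/eqP => z_sup; apply: not_attained; rewrite -sup_s -z_sup.
pose pick n t := epsilon (inhabits 0) (spec n t).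
have pickP n t : t < s -> spec n t (pick n t) by move=> /(next n) ex; apply: epsilon_spec.
pose y := fix y n := if n is m.+1 then pick n (y m) else pick 0%N (s - 1).
have yP n : spec n (if n is m.+1 then y m else s - 1) (y n).
  elim: n => [|n [_ _ y_lt]]; apply: pickP => //.
  by rewrite ltrBlDr ltrDl.
exists y; split=> n; try by case: (yP n).
  by case: (yP n.+1) => _ + _; rewrite gt_max => /andP[].
by case: (yP n) => _ + _; rewrite gt_max => /andP[].
Qed.

Unset Implicit Arguments.

Theorem theoremA (R : realType) (V : lmodType R[i]) (ip : V -> V -> R[i])
  (hH : hilbert_space ip) (hsep : separable ip) (hinf : infinite_dimensional V)
  (T : V -> V) (hT : quasinilpotent ip T) :
  right_closed (power_set ip T).
Proof.
case: hH => ipP ip_complete Y Y_neq0 Y_sub.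
have [//|not_attained] := pselect (Y (ereal_sup Y)); first exact: Y_sub.
have Y_le1 z : Y z -> (z <= 1%:E)%E.
  by case/Y_sub => x /eqP x_neq0 <-; exact: k_x_le1.
have [s sup_s] := ereal_sup_not_attained_fin Y_neq0 Y_le1 not_attained.
have s_le1 : s <= 1 by rewrite -lee_fin -sup_s; exact: ge_ereal_sup.
rewrite sup_s in not_attained *.
have [y [Yy y_incr y_lt y_gt]] := ereal_sup_not_attained_seq sup_s not_attained.
have xs_ex n : exists x, x != 0 /\ k_x ip T x = (y n)%:E.
  by have [x /eqP x_neq0 k_x_eq] := Y_sub _ (Yy n); exists x.
have [xs xsP] := choice xs_ex.
have xs_neq0 n : xs n != 0 by case: (xsP n).
have k_xs n : k_x ip T (xs n) = (y n)%:E by case: (xsP n).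
exists (xlim ipP ip_complete hT y_lt xs_neq0 k_xs); first exact/eqP/xlim_neq0.
exact: k_x_xlim.
Qed.
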